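(* Let $x^0=x^1\in\mathbb{R}^n$ and let $\{x^k\}$ be generated by $$x^{k+1}=x^k-\omega\nabla f_{\mathbf{S}_k}(x^k)+\beta(x^k-x^{k-1}),\qquad k\ge1,$$ where $0\le\beta<1$, $\omega>0$ and $\omega+2\beta<2$. Let $x^*\in\mathbb{R}^n$ be any vector with $f(x^* )=0$ and let $\hat x^k=\frac1k\sum_{t=1}^k x^t$. Then for all $k\ge1$ $$\mathbb{E}[f(\hat x^k)]\le\frac{(1-\beta)^2\|x^0-x^*\|_{\mathbf{B}}^2+2\omega\beta f(x^0)}{2\omega(2-2\beta-\omega)\,k}.$$
   Context: Let $\mathbf{A}\in\mathbb{R}^{m\times n}$ and $b\in\mathbb{R}^m$ be such that the linear system $\mathbf{A}x=b$ is consistent, and let $\mathcal{L}=\{x\in\mathbb{R}^n:\mathbf{A}x=b\}$. Let $\mathbf{B}\in\mathbb{R}^{n\times n}$ be symmetric positive definite, $\langle x,y\rangle_{\mathbf{B}}=x^\top\mathbf{B}y$, $\|x\|_{\mathbf{B}}=\sqrt{x^\top\mathbf{B}x}$. Let $\mathcal{D}$ be a probability distribution over random real matrices $\mathbf{S}$ with $m$ rows (any number of columns). For $\mathbf{S}\sim\mathcal{D}$ set $\mathbf{H}=\mathbf{S}(\mathbf{S}^\top\mathbf{A}\mathbf{B}^{-1}\mathbf{A}^\top\mathbf{S})^\dagger\mathbf{S}^\top$ ($\dagger$ denotes the Moore–Penrose pseudoinverse) and $\mathbf{Z}=\mathbf{A}^\top\mathbf{H}\mathbf{A}$; $\mathbb{E}[\mathbf{Z}]$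 is assumed finite. Define $f_{\mathbf{S}}(x)=\tfrac12(\mathbf{A}x-b)^\top\mathbf{H}(\mathbf{A}x-b)$, $f(x)=\mathbb{E}_{\mathbf{S}\sim\mathcal{D}}[f_{\mathbf{S}}(x)]$, and $\nabla f_{\mathbf{S}}(x)=\mathbf{B}^{-1}\mathbf{A}^\top\mathbf{H}(\mathbf{A}x-b)$ (the gradient of $f_{\mathbf{S}}$ with respect to $\langle\cdot,\cdot\rangle_{\mathbf{B}}$). The matrices $\mathbf{S}_k$ are drawn i.i.d. from $\mathcal{D}$, independently of everything else. *)

From HB Require Import structures.
From mathcomp Require Import all_boot all_order all_algebra.
From mathcomp Require Import all_classical all_reals all_analysis.
Set Implicit Arguments. Unset Strict Implicit. Unset Printing Implicit Defensive.
Import Order.TTheory GRing.Theory Num.Theory.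
Local Open Scope ring_scope.
Local Open Scope classical_set_scope.

Definition is_MP (R : realType) (p q : nat) (M : 'M[R]_(p, q)) (X : 'M[R]_(q, p)) : Prop :=
  [/\ M *m X *m M = M, X *m M *m X = X, (M *m X)^T = M *m X & (X *m M)^T = X *m M].

(* The Moore--Penrose pseudoinverse (exists and is unique for real matrices). *)
Definition mpinv (R : realType) (p q : nat) (M : 'M[R]_(p, q)) : 'M[R]_(q, p) :=
  xget 0 [set X | is_MP M X].

Definition spd (R : realType) (n : nat) (B : 'M[R]_n) : Prop :=
  B^T = B /\ forall x : 'cV[R]_n, x != 0 -> 0 < (x^T *m B *m x) 0 0.

Definition normB2 (R : realType) (n : nat) (B : 'M[R]_n) (x : 'cV[R]_n) : R :=
  (x^T *m B *m x) 0 0.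

Section Sketch.
Variables (R : realType) (m n : nat) (A : 'M[R]_(m, n)) (b : 'cV[R]_m) (B : 'M[R]_n).
Variables (d : measure_display) (T : measurableType d).
(* a sketch sample t : T determines a sketch matrix S t with m rows and q t columns;
   taking T to be the space of sketch matrices itself recovers the paper's setting *)
Variables (q : T -> nat) (S : forall t : T, 'M[R]_(m, q t)).

Definition Hmat (t : T) : 'M[R]_m :=
  S t *m mpinv ((S t)^T *m A *m invmx B *m A^T *m S t) *m (S t)^T.

Definition Zmat (t : T) : 'M[R]_n := A^T *m Hmat t *m A.

Definition fS (t : T) (x : 'cV[R]_n) : R :=
  2^-1 * (((A *m x - b)^T *m Hmat t *m (A *m x - b)) 0 0).

(* B-gradient of f_S *)
Definition gradfS (t : T) (x : 'cV[R]_n) : 'cV[R]_n :=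
  invmx B *m A^T *m Hmat t *m (A *m x - b).

Definition fexp (P : probability T R) (x : 'cV[R]_n) : \bar R :=
  (\int[P]_t (fS t x)%:E)%E.

(* Heavy-ball iterates driven by a list of sketches [S_1; ...; S_j]:
   returns (x^j, x^{j+1}), starting from (x^0, x^1) = (x0, x0). *)
Definition hb_step (omega beta : R) (xx : 'cV[R]_n * 'cV[R]_n) (t : T)
  : 'cV[R]_n * 'cV[R]_n :=
  (xx.2, xx.2 - omega *: gradfS t xx.2 + beta *: (xx.2 - xx.1)).

Definition hb_pair (omega beta : R) (x0 : 'cV[R]_n) (s : seq T) :=
  foldl (hb_step omega beta) (x0, x0) s.

(* x^{j+1} as a function of the sketches S_1, ..., S_j (the first j of s) *)
Definition hb_iter (omega beta : R) (x0 : 'cV[R]_n) (s : seq T) (j : nat) : 'cV[R]_n :=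
  (hb_pair omega beta x0 (take j s)).2.

(* \hat x^k = (1/k) sum_{t=1}^k x^t, as a function of s = [S_1; ...; S_{k-1}] *)
Definition hb_avg (omega beta : R) (x0 : 'cV[R]_n) (k : nat) (s : seq T) : 'cV[R]_n :=
  (k%:R)^-1 *: \sum_(j < k) hb_iter omega beta x0 s j.

End Sketch.

(* Expectation over N i.i.d. draws S_1, ..., S_N ~ P of g [S_1; ...; S_N]
   (iterated integral, i.e. integral w.r.t. the product measure P^N). *)
Fixpoint Eiid (d : measure_display) (T : measurableType d) (R : realType)
  (P : probability T R) (N : nat) (g : seq T -> \bar R) : \bar R :=
  match N with
  | 0 => g [::]
  | N'.+1 => (\int[P]_t Eiid P N' (fun s => g (t :: s)))%E
  end.

(* Fix xs with A xs = b.  Each sketched loss is a quadratic form,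
   f_S(x) = 1/2 (x - xs)' Z (x - xs) with gradient B^-1 Z (x - xs), where Z is
   symmetric positive semidefinite and Z B^-1 Z = Z (because X G X = X for the
   pseudoinverse X of G = S' A B^-1 A' S).  So f is the quadratic form of E[Z]:
   it is convex, and f(xstar) = 0 puts xstar - xs in the kernel of E[Z].
   For the heavy-ball iterates, the shifted point
   z^k = x^k + beta/(1-beta) (x^k - x^(k-1)) takes a plain sketched gradient
   step of length omega/(1-beta), and the Lyapunov function
     V_k = |z^k - xstar|_B^2 + 2 omega beta/(1-beta)^2 f(x^(k-1))
   drops in conditional expectation by at least c f(x^k), with
   c = 2 omega (2 - 2 beta - omega)/(1-beta)^2 > 0.  Telescoping yields
   c E[f(x^1) + ... + f(x^k)] <= V_1, and Jensen's inequality for the convex f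
   bounds k f of the average by that sum. *)
From HB Require Import structures.
From mathcomp Require Import all_boot all_order all_algebra.
From mathcomp Require Import all_classical all_reals all_analysis.
From mathcomp Require Import ring lra.
Import Order.TTheory GRing.Theory Num.Theory.
Local Open Scope ring_scope.
Set Implicit Arguments. Unset Strict Implicit.

Section MatrixForm.
Variables (R : comPzRingType) (n : nat).
Implicit Types (M : 'M[R]_n) (u v w : 'cV[R]_n).

Definition mxform M u v : R := (u^T *m M *m v) 0 0.

Lemma mxformDl M u w v : mxform M (u + w) v = mxform M u v + mxform M w v.
Proof. by rewrite /mxform linearD /= !mulmxDl mxE. Qed.

Lemma mxformDr M u v w : mxform M u (v + w) = mxform M u v + mxform M u w.
Proof. by rewrite /mxform !mulmxDr mxE. Qed.

Lemma mxformZl M a u v : mxform M (a *: u) v = a * mxform M u v.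
Proof. by rewrite /mxform linearZ /= -!scalemxAl mxE. Qed.

Lemma mxformZr M a u v : mxform M u (a *: v) = a * mxform M u v.
Proof. by rewrite /mxform -!scalemxAr mxE. Qed.

Lemma mxformBl M u w v : mxform M (u - w) v = mxform M u v - mxform M w v.
Proof. by rewrite -scaleN1r mxformDl mxformZl mulN1r. Qed.

Lemma mxformBr M u v w : mxform M u (v - w) = mxform M u v - mxform M u w.
Proof. by rewrite -scaleN1r mxformDr mxformZr mulN1r. Qed.

Lemma mxform_sumr M u (I : Type) (r : seq I) (Pr : pred I) (F : I -> 'cV[R]_n) :
  mxform M u (\sum_(i <- r | Pr i) F i) = \sum_(i <- r | Pr i) mxform M u (F i).
Proof. by rewrite /mxform mulmx_sumr summxE. Qed.

Lemma mxformE M u v : mxform M u v = \sum_i \sum_j u i 0 * v j 0 * M i j.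
Proof.
rewrite /mxform mxE; under eq_bigr do rewrite mxE mulr_suml.
rewrite exchange_big; apply: eq_bigr => i _; apply: eq_bigr => j _.
by rewrite !mxE mulrAC.
Qed.

Lemma mxform_sym M u v : M^T = M -> mxform M u v = mxform M v u.
Proof.
move=> sM; rewrite /mxform.
have -> : (u^T *m M *m v) 0 0 = (u^T *m M *m v)^T 0 0 by rewrite [RHS]mxE.
by rewrite !trmx_mul trmxK sM mulmxA.
Qed.

Lemma mxform_sqrB M u w : M^T = M ->
  mxform M (u - w) (u - w) = mxform M u u - 2 * mxform M u w + mxform M w w.
Proof. by move=> sM; rewrite !mxformBl !mxformBr [mxform M w u]mxform_sym //; ring. Qed.

End MatrixForm.

Section PositiveSemidefinite.
Variables (R : realFieldType) (n : nat).
Implicit Types (M : 'M[R]_n) (u v w : 'cV[R]_n).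

Definition mxpsd M := forall u, 0 <= mxform M u u.

Lemma mxpsd_orth M u w : M^T = M -> mxpsd M ->
  mxform M u u = 0 -> mxform M w u = 0.
Proof.
move=> sM psdM uu0; set a := mxform M w u; set K := mxform M w w.
have K0 : 0 <= K by exact: psdM.
have K1 : K + 1 != 0 by rewrite gt_eqF // ltr_wpDl.
set s := a / (K + 1).
have e : (K + 1) ^+ 2 * mxform M (u - s *: w) (u - s *: w) = - (a ^+ 2 * (K + 2)).
  rewrite mxform_sqrB // uu0 !mxformZr !mxformZl [mxform M u w]mxform_sym // -/a -/K /s.
  by field.
have := mulr_ge0 (sqr_ge0 (K + 1)) (psdM (u - s *: w)); rewrite e oppr_ge0.
have K2 : 0 < K + 2 by rewrite ltr_wpDl.
by rewrite pmulr_lle0 // => a2; apply/eqP; rewrite -sqrf_eq0 eq_le a2 sqr_ge0.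
Qed.

Definition mxloss M c x := 2^-1 * mxform M (x - c) (x - c).

Lemma mxloss_ge0 M c x : mxpsd M -> 0 <= mxloss M c x.
Proof. by move=> psdM; rewrite mulr_ge0 ?invr_ge0. Qed.

Lemma mxloss_mean_le M c k (y : 'I_k -> 'cV[R]_n) : M^T = M -> mxpsd M -> (0 < k)%N ->
  mxloss M c (k%:R^-1 *: \sum_j y j) <= k%:R^-1 * \sum_j mxloss M c (y j).
Proof.
move=> sM psdM k0; have kn : k%:R != 0 :> R by rewrite pnatr_eq0 -lt0n.
set e := fun j => y j - c; set eb := k%:R^-1 *: \sum_j e j.
have ebE : k%:R^-1 *: \sum_j y j - c = eb.
  rewrite /eb /e sumrB scalerBr sumr_const card_ord -scaler_nat scalerA mulVf //.
  by rewrite scale1r.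
have sum_e : \sum_j e j = k%:R *: eb by rewrite /eb scalerA mulfV // scale1r.
have spread : \sum_j mxform M (e j - eb) (e j - eb) =
              \sum_j mxform M (e j) (e j) - k%:R * mxform M eb eb.
  under eq_bigr do rewrite mxform_sqrB // [mxform M (e _) eb]mxform_sym //.
  rewrite !big_split /= sumrN -mulr_sumr -mxform_sumr sum_e mxformZr sumr_const card_ord.
  by rewrite -mulr_natl; ring.
have : 0 <= \sum_j mxform M (e j - eb) (e j - eb) by apply: sumr_ge0 => j _.
rewrite spread subr_ge0 /mxloss ebE -mulr_sumr => le_eb.
rewrite mulrCA ler_pM2l ?invr_gt0 // -(ler_pM2l (ltr0Sn _ k.-1)) prednK //.
by rewrite mulrA mulfV // mul1r.
Qed.

End PositiveSemidefinite.

Section SymmetricPositiveDefinite.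
Variables (R : realType) (n : nat) (B : 'M[R]_n).
Hypothesis spdB : spd B.

Lemma spd_sym : B^T = B. Proof. by case: spdB. Qed.

Lemma spd_psd : mxpsd B.
Proof.
move=> x; have [->|x0] := eqVneq x 0; first by rewrite /mxform mulmx0 mxE.
by apply/ltW; case: spdB => _ /(_ x x0).
Qed.

Lemma spd_unitmx : B \in unitmx.
Proof.
rewrite -row_free_unit -kermx_eq0; apply/eqP/row_matrixP => i.
rewrite row0; set u := row i (kermx B).
have uB : u *m B = 0 by apply/sub_kermxP; exact: row_sub.
apply/eqP; apply/negPn/negP => u0.
have uT0 : u^T != 0 by rewrite trmx_eq0.
by case: spdB => _ /(_ _ uT0); rewrite trmxK uB mul0mx mxE ltxx.
Qed.

Lemma spd_invmx_sym : (invmx B)^T = invmx B.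
Proof. by rewrite trmx_inv spd_sym. Qed.

Lemma mxform_invmx u v : mxform (invmx B) u v = mxform B (invmx B *m u) (invmx B *m v).
Proof.
rewrite /mxform trmx_mul spd_invmx_sym -!mulmxA [B *m (_ *m _)]mulmxA.
by rewrite mulmxV ?spd_unitmx // mul1mx.
Qed.

Lemma spd_invmx_psd : mxpsd (invmx B).
Proof. by move=> u; rewrite mxform_invmx; exact: spd_psd. Qed.

Lemma mxform_mulinvmx M u v : mxform B u (invmx B *m M *m v) = mxform M u v.
Proof.
by rewrite /mxform !mulmxA -[u^T *m B *m _]mulmxA mulmxV ?spd_unitmx // mulmx1.
Qed.

End SymmetricPositiveDefinite.

Section PseudoInverse.
Variable R : realType.

Lemma is_MP_uniq p r (M : 'M[R]_(p, r)) X Y : is_MP M X -> is_MP M Y -> X = Y.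
Proof.
case=> MXM XMX sMX sXM [MYM YMY sMY sYM].
have eMX : M *m X = M *m Y.
  have -> : M *m X = (M *m X)^T *m (M *m Y)^T.
    by rewrite -trmx_mul !mulmxA MYM sMX.
  by rewrite sMX sMY mulmxA MXM.
have eXM : X *m M = Y *m M.
  have -> : X *m M = (Y *m M)^T *m (X *m M)^T.
    rewrite -trmx_mul !mulmxA -[X *m M *m Y]mulmxA -[X *m (M *m Y) *m M]mulmxA.
    by rewrite MYM sXM.
  rewrite sYM sXM !mulmxA -[Y *m M *m X]mulmxA -[Y *m (M *m X) *m M]mulmxA.
  by rewrite MXM.
by rewrite -XMX -mulmxA eMX mulmxA eXM YMY.
Qed.

Lemma is_MP_trmx p (M X : 'M[R]_p) : M^T = M -> is_MP M X -> is_MP M X^T.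
Proof.
move=> sM [MXM XMX sMX sXM]; split.
- by have := congr1 trmx MXM; rewrite !trmx_mul sM mulmxA.
- by have := congr1 trmx XMX; rewrite !trmx_mul sM mulmxA.
- by rewrite trmx_mul trmxK sM -sXM trmx_mul sM.
- by rewrite trmx_mul trmxK sM -sMX trmx_mul sM.
Qed.

(* When no pseudoinverse is found, [mpinv] returns the junk value [0], which
   satisfies both identities as well. *)
Lemma mpinv_sym p (M : 'M[R]_p) : M^T = M -> (mpinv M)^T = mpinv M.
Proof.
move=> sM; rewrite /mpinv; case: xgetP => [X _ MP_X|_]; last by rewrite trmx0.
exact: is_MP_uniq (is_MP_trmx sM MP_X) MP_X.
Qed.

Lemma mpinv_mulmxK p r (M : 'M[R]_(p, r)) : mpinv M *m M *m mpinv M = mpinv M.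
Proof.
by rewrite /mpinv; case: xgetP => [X _ [_ XMX _ _]|_]; rewrite ?XMX ?mul0mx.
Qed.

End PseudoInverse.

Section SketchMatrices.
Variables (R : realType) (m n : nat) (A : 'M[R]_(m, n)) (B : 'M[R]_n).
Variables (d : measure_display) (T : measurableType d).
Variables (q : T -> nat) (S : forall t : T, 'M[R]_(m, q t)).
Hypothesis spdB : spd B.
Local Notation G t := ((S t)^T *m A *m invmx B *m A^T *m S t).
Local Notation Z := (Zmat A B S).

Lemma sketch_gram_sym t : (G t)^T = G t.
Proof. by rewrite !trmx_mul !trmxK spd_invmx_sym // !mulmxA. Qed.

Lemma sketch_gram_psd t : mxpsd (G t).
Proof.
move=> y; have -> : mxform (G t) y y = mxform (invmx B) (A^T *m S t *m y) (A^T *m S t *m y).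
  by rewrite /mxform !trmx_mul !trmxK !mulmxA.
exact: spd_invmx_psd.
Qed.

Lemma Hmat_sym t : (Hmat A B S t)^T = Hmat A B S t.
Proof. by rewrite /Hmat !trmx_mul trmxK (mpinv_sym (sketch_gram_sym t)) mulmxA. Qed.

Lemma Zmat_sym t : (Z t)^T = Z t.
Proof.
rewrite /Zmat; move: (Hmat_sym t); set H := Hmat _ _ _ t => sH; clearbody H.
by rewrite !trmx_mul trmxK sH mulmxA.
Qed.

Lemma Zmat_invmx_Zmat t : Z t *m invmx B *m Z t = Z t.
Proof. by rewrite /Zmat /Hmat -[in RHS](mpinv_mulmxK (G t)) !mulmxA. Qed.

Lemma Zmat_psd t : mxpsd (Z t).
Proof.
move=> u; set X := mpinv (G t); set w := (S t)^T *m A *m u.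
have -> : mxform (Z t) u u = mxform (G t) (X *m w) (X *m w).
  rewrite /mxform trmx_mul (mpinv_sym (sketch_gram_sym t)) -/X.
  transitivity ((u^T *m A^T *m S t *m (X *m G t *m X) *m (S t)^T *m A *m u) 0 0).
    by rewrite mpinv_mulmxK /Zmat /Hmat !mulmxA.
  by rewrite /w !trmx_mul trmxK !mulmxA.
exact: sketch_gram_psd.
Qed.

Lemma mxform_invmx_Zmat t r :
  mxform B (invmx B *m Z t *m r) (invmx B *m Z t *m r) = mxform (Z t) r r.
Proof.
rewrite mxform_mulinvmx // mxform_sym ?Zmat_sym //.
by rewrite /mxform -[in RHS](Zmat_invmx_Zmat t) !mulmxA.
Qed.

End SketchMatrices.

Section MatrixMean.
Variables (d : measure_display) (T : measurableType d) (R : realType) (n : nat).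
Variables (P : probability T R) (M : T -> 'M[R]_n).
Hypothesis intM : forall i j, P.-integrable setT (fun t => (M t i j)%:E).
Local Open Scope ereal_scope.

Definition mx_mean : 'M[R]_n := \matrix_(i, j) fine (\int[P]_t (M t i j)%:E).

Let EFin_mxformE (u v : 'cV[R]_n) t :
  (mxform (M t) u v)%:E = \sum_i \sum_j (u i 0 * v j 0)%:E * (M t i j)%:E.
Proof.
rewrite mxformE -sumEFin; apply: eq_bigr => i _.
by rewrite -sumEFin; apply: eq_bigr => j _; rewrite EFinM.
Qed.

Let integrable_row_sum (u v : 'cV[R]_n) i :
  P.-integrable setT (fun t => \sum_j (u i 0 * v j 0)%:E * (M t i j)%:E).
Proof. by apply: integrable_sum => // j _; exact: integrableZl. Qed.

Lemma integrable_mxform u v : P.-integrable setT (fun t => (mxform (M t) u v)%:E).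
Proof.
under eq_fun do rewrite EFin_mxformE.
by apply: integrable_sum => // i _; exact: integrable_row_sum.
Qed.

Lemma integral_mxform u v : \int[P]_t (mxform (M t) u v)%:E = (mxform mx_mean u v)%:E.
Proof.
under eq_integral do rewrite EFin_mxformE.
rewrite (integral_sum _ (integrable_row_sum u v)) //.
rewrite mxformE -sumEFin; apply: eq_bigr => i _.
rewrite (integral_sum _ (fun j => integrableZl _ _ (intM i j))) // -sumEFin.
apply: eq_bigr => j _; rewrite integralZl // mxE !EFinM fineK //.
exact: integrable_fin_num.
Qed.

Lemma mx_mean_sym : (forall t, (M t)^T = M t) -> mx_mean^T = mx_mean.
Proof.
move=> sM; apply/matrixP => i j; rewrite !mxE; congr (fine _).
by apply: eq_integral => t _; rewrite -[in LHS]sM mxE.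
Qed.

Lemma mx_mean_psd : (forall t, mxpsd (M t)) -> mxpsd mx_mean.
Proof.
move=> psdM u; rewrite -lee_fin -integral_mxform.
by apply: integral_ge0 => t _; rewrite lee_fin; apply: psdM.
Qed.

End MatrixMean.

Section SketchedObjective.
Variables (R : realType) (m n : nat) (A : 'M[R]_(m, n)) (b : 'cV[R]_m) (B : 'M[R]_n).
Variables (d : measure_display) (T : measurableType d) (P : probability T R).
Variables (q : T -> nat) (S : forall t : T, 'M[R]_(m, q t)).
Variable xs : 'cV[R]_n.
Hypothesis solxs : A *m xs = b.
Local Notation Z := (Zmat A B S).

Lemma fS_mxloss t x : fS A b B S t x = mxloss (Z t) xs x.
Proof. by rewrite /fS /mxloss /mxform -solxs -mulmxBr trmx_mul /Zmat !mulmxA. Qed.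

Lemma gradfS_Zmat t x : gradfS A b B S t x = invmx B *m Z t *m (x - xs).
Proof. by rewrite /gradfS -solxs -mulmxBr /Zmat !mulmxA. Qed.

Hypothesis intZ : forall i j, P.-integrable setT (fun t => (Z t i j)%:E).

Lemma fexp_mxloss x : fexp A b B S P x = (mxloss (mx_mean P Z) xs x)%:E.
Proof.
rewrite /fexp; under eq_integral do rewrite fS_mxloss /mxloss EFinM.
by rewrite integralZl ?integrable_mxform // integral_mxform // /mxloss EFinM.
Qed.

Hypothesis spdB : spd B.

Lemma mean_Zmat_sym : (mx_mean P Z)^T = mx_mean P Z.
Proof. by apply: mx_mean_sym => t; exact: Zmat_sym. Qed.

Lemma mean_Zmat_psd : mxpsd (mx_mean P Z).
Proof. by apply: mx_mean_psd => // t; exact: Zmat_psd. Qed.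

End SketchedObjective.

Section Telescoping.
Variables (d : measure_display) (T : measurableType d) (R : realType).
Variable P : probability T R.

(* No measurability is needed: by [ge0_integralTE], the integral of a
   nonnegative function is a supremum over the simple functions below it. *)
Lemma ge0_le_integralT_nonmeasurable (f g : T -> \bar R) :
  (forall t, 0 <= f t)%E -> (forall t, f t <= g t)%E ->
  (\int[P]_t f t <= \int[P]_t g t)%E.
Proof.
move=> f0 fg; have g0 t : (0 <= g t)%E by exact: le_trans (fg t).
rewrite !ge0_integralTE //; apply: ereal_sup_le => _ [h hf <-].
by exists h => //= t; exact: le_trans (hf t) (fg t).
Qed.

Lemma Eiid_ge0 N g : (forall s, size s = N -> 0 <= g s)%E -> (0 <= Eiid P N g)%E.
Proof.
elim: N g => [|N IH] g g0 /=; first exact: g0.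
by apply: integral_ge0 => t _; apply: IH => s sN; apply: g0; rewrite /= sN.
Qed.

Lemma le_Eiid N g1 g2 : (forall s, size s = N -> 0 <= g1 s)%E ->
  (forall s, size s = N -> g1 s <= g2 s)%E -> (Eiid P N g1 <= Eiid P N g2)%E.
Proof.
elim: N g1 g2 => [|N IH] g1 g2 g10 g12 /=; first exact: g12.
apply: ge0_le_integralT_nonmeasurable => t.
  by apply: Eiid_ge0 => s sN; apply: g10; rewrite /= sN.
by apply: IH => s sN; [apply: g10 | apply: g12]; rewrite /= sN.
Qed.

Variables (X : Type) (step : X -> T -> X) (h W : X -> R).

Definition path_sum x (s : seq T) : R :=
  \sum_(j < (size s).+1) h (foldl step x (take j s)).

Lemma path_sum_cons x t s : path_sum x (t :: s) = h x + path_sum (step x t) s.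
Proof. by rewrite /path_sum /= big_ord_recl. Qed.

Hypotheses (h_ge0 : forall x, 0 <= h x) (W_ge0 : forall x, 0 <= W x).
Hypothesis W_step_integrable : forall x, P.-integrable setT (fun t => (W (step x t))%:E).
Hypothesis W_decrease : forall x, (\int[P]_t (W (step x t))%:E <= (W x - h x)%:E)%E.

Lemma path_sum_ge0 x s : 0 <= path_sum x s.
Proof. exact: sumr_ge0. Qed.

Lemma Eiid_path_sum_le N c x acc : 0 <= c -> 0 <= acc ->
  (Eiid P N (fun s => (acc + c * path_sum x s)%:E) <= (acc + c * W x)%:E)%E.
Proof.
move=> c0; elim: N x acc => [|N IH] x acc acc0 /=.
  rewrite /path_sum big_ord1 take0 lee_fin lerD2l ler_wpM2l // -subr_ge0.
  rewrite -lee_fin; apply: le_trans (W_decrease x).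
  by apply: integral_ge0 => t _; rewrite lee_fin.
under eq_fun do under eq_fun do rewrite path_sum_cons mulrDr addrA.
apply: (@le_trans _ _ (\int[P]_t ((acc + c * h x)%:E + c%:E * (W (step x t))%:E))%E).
  apply: ge0_le_integralT_nonmeasurable => t.
    apply: Eiid_ge0 => s _; rewrite lee_fin addr_ge0 ?mulr_ge0 ?path_sum_ge0 //.
    by rewrite addr_ge0 ?mulr_ge0.
  by rewrite -EFinM -EFinD IH // addr_ge0 ?mulr_ge0.
have P1 : ((P : {measure set T -> \bar R}) setT = 1)%E by exact: probability_setT.
rewrite integralD //; last 2 first.
- exact: finite_measure_integrable_cst.
- exact: integrableZl.
rewrite integral_cst // P1 mule1 integralZl //.
apply: le_trans (leeD2l _ (lee_wpmul2l _ (W_decrease x))) _; first by rewrite lee_fin.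
by rewrite -EFinM -EFinD lee_fin; lra.
Qed.

End Telescoping.

Section HeavyBallLyapunov.
Variables (R : realType) (m n : nat) (A : 'M[R]_(m, n)) (b : 'cV[R]_m) (B : 'M[R]_n).
Variables (d : measure_display) (T : measurableType d) (P : probability T R).
Variables (q : T -> nat) (S : forall t : T, 'M[R]_(m, q t)).
Variables (xs xstar : 'cV[R]_n) (omega beta : R).
Hypothesis spdB : spd B.
Hypothesis solxs : A *m xs = b.
Hypothesis intZ : forall i j, P.-integrable setT (fun t => (Zmat A B S t i j)%:E).
Hypotheses (omega_ge0 : 0 <= omega) (beta_ge0 : 0 <= beta) (beta_lt1 : beta < 1).
Hypothesis fstar0 : mxloss (mx_mean P (Zmat A B S)) xs xstar = 0.
Local Notation Z := (Zmat A B S).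
Local Notation EZ := (mx_mean P Z).
Local Notation F := (mxloss EZ xs).
Local Notation step := (hb_step A b B S omega beta).

Definition hb_rate := omega / (1 - beta).
Definition hb_mom := beta / (1 - beta).

Definition hb_shift (xx : 'cV[R]_n * 'cV[R]_n) := xx.2 + hb_mom *: (xx.2 - xx.1).

Definition hb_lyap xx :=
  mxform B (hb_shift xx - xstar) (hb_shift xx - xstar) + 2 * hb_rate * hb_mom * F xx.1.

Let beta1_neq0 : 1 - beta != 0. Proof. by rewrite subr_eq0 gt_eqF. Qed.
Let hb_rate_ge0 : 0 <= hb_rate.
Proof. by rewrite divr_ge0 // subr_ge0 ltW. Qed.
Let hb_mom_ge0 : 0 <= hb_mom.
Proof. by rewrite divr_ge0 // subr_ge0 ltW. Qed.
Let EZ_sym : EZ^T = EZ. Proof. exact: mean_Zmat_sym. Qed.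
Let EZ_psd : mxpsd EZ. Proof. exact: mean_Zmat_psd. Qed.

Lemma hb_lyap_start x0 :
  hb_lyap (x0, x0) = mxform B (x0 - xstar) (x0 - xstar) + 2 * hb_rate * hb_mom * F x0.
Proof. by rewrite /hb_lyap /hb_shift /= subrr scaler0 addr0. Qed.

Lemma hb_shift_step xx t :
  hb_shift (step xx t) - xstar = hb_shift xx - xstar - hb_rate *: gradfS A b B S t xx.2.
Proof.
rewrite /hb_shift /hb_step /hb_rate /hb_mom /=; apply/matrixP => i j; rewrite !mxE.
by field.
Qed.

Lemma hb_lyap_step xx t : hb_lyap (step xx t) =
  mxform B (hb_shift xx - xstar) (hb_shift xx - xstar)
  - 2 * hb_rate * mxform (Z t) (hb_shift xx - xstar) (xx.2 - xs)
  + hb_rate ^+ 2 * mxform (Z t) (xx.2 - xs) (xx.2 - xs)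
  + 2 * hb_rate * hb_mom * F xx.2.
Proof.
rewrite /hb_lyap hb_shift_step (gradfS_Zmat _ _ solxs) mxform_sqrB ?spd_sym //.
rewrite !mxformZr !mxformZl mxform_mulinvmx // mxform_invmx_Zmat //= expr2.
by rewrite !mulrA.
Qed.

Let hb_lyap_stepE xx : (fun t => (hb_lyap (step xx t))%:E) = (fun t =>
  (mxform B (hb_shift xx - xstar) (hb_shift xx - xstar)
   + 2 * hb_rate * hb_mom * F xx.2)%:E
  + ((- (2 * hb_rate))%:E * (mxform (Z t) (hb_shift xx - xstar) (xx.2 - xs))%:E
     + (hb_rate ^+ 2)%:E * (mxform (Z t) (xx.2 - xs) (xx.2 - xs))%:E))%E.
Proof.
by apply/funext => t; rewrite hb_lyap_step -!EFinM -!EFinD; congr (_%:E); ring.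
Qed.

Let integrableZ_mxform a u v :
  P.-integrable setT (fun t => (a%:E * (mxform (Z t) u v)%:E)%E).
Proof. exact: integrableZl (integrable_mxform intZ u v). Qed.

Lemma integrable_hb_lyap_step xx : P.-integrable setT (fun t => (hb_lyap (step xx t))%:E).
Proof.
rewrite hb_lyap_stepE; apply: integrableD => //; last exact: integrableD.
exact: finite_measure_integrable_cst.
Qed.

Lemma integral_hb_lyap_step xx : (\int[P]_t (hb_lyap (step xx t))%:E =
  (mxform B (hb_shift xx - xstar) (hb_shift xx - xstar)
   - 2 * hb_rate * mxform EZ (hb_shift xx - xstar) (xx.2 - xs)
   + hb_rate ^+ 2 * mxform EZ (xx.2 - xs) (xx.2 - xs)
   + 2 * hb_rate * hb_mom * F xx.2)%:E)%E.
Proof.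
rewrite hb_lyap_stepE integralD //; last 2 first.
- exact: finite_measure_integrable_cst.
- exact: integrableD.
rewrite integralD //.
have P1 : ((P : {measure set T -> \bar R}) setT = 1)%E by exact: probability_setT.
rewrite !integralZl ?integrable_mxform // !integral_mxform // integral_cst // P1 mule1.
by rewrite -!EFinM -!EFinD; congr (_%:E); ring.
Qed.

Lemma hb_lyap_ge0 xx : 0 <= hb_lyap xx.
Proof.
apply: addr_ge0; first exact: spd_psd.
apply: mulr_ge0; last exact: mxloss_ge0.
by apply: mulr_ge0 => //; apply: mulr_ge0.
Qed.

Definition hb_gain := 4 * hb_rate - 2 * hb_rate ^+ 2.

Lemma hb_gainE : hb_gain = 2 * omega * (2 - 2 * beta - omega) / (1 - beta) ^+ 2.
Proof. by rewrite /hb_gain /hb_rate; field. Qed.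

Lemma hb_gain_gt0 : 0 < omega -> omega + 2 * beta < 2 -> 0 < hb_gain.
Proof.
move=> omega_gt0 omega_beta; rewrite hb_gainE divr_gt0 ?exprn_gt0 ?subr_gt0 //.
by rewrite !mulr_gt0 //; lra.
Qed.

Lemma hb_lyap_decrease xx :
  (\int[P]_t (hb_lyap (step xx t))%:E <= (hb_lyap xx - hb_gain * F xx.2)%:E)%E.
Proof.
rewrite integral_hb_lyap_step lee_fin /hb_gain.
set r := xx.2 - xs; set dx := xx.2 - xx.1; set rstar := xstar - xs.
have shiftE : hb_shift xx - xstar = r - rstar + hb_mom *: dx.
  by rewrite /r /rstar /dx /hb_shift; apply/matrixP => i j; rewrite !mxE; ring.
have prevE : xx.1 - xs = r - dx.
  by rewrite /r /dx; apply/matrixP => i j; rewrite !mxE; ring.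
have rstar_orth : mxform EZ rstar r = 0.
  rewrite mxform_sym //; apply: mxpsd_orth => //.
  by move: fstar0; rewrite /mxloss => /eqP; rewrite mulf_eq0 invr_eq0 pnatr_eq0 => /eqP.
have cross : mxform EZ (hb_shift xx - xstar) r = mxform EZ r r + hb_mom * mxform EZ dx r.
  by rewrite shiftE mxformDl mxformBl rstar_orth subr0 mxformZl.
have prev : F xx.1 = 2^-1 * (mxform EZ r r - 2 * mxform EZ dx r + mxform EZ dx dx).
  by rewrite /mxloss prevE mxform_sqrB // [mxform EZ r dx]mxform_sym.
have dx_ge0 : 0 <= mxform EZ dx dx := EZ_psd dx.
rewrite /hb_lyap cross prev /mxloss -/r -subr_ge0.
set a := hb_rate; set g := hb_mom; set W := mxform B _ _.
set Qr := mxform EZ r r; set Qd := mxform EZ dx dx; set Qdr := mxform EZ dx r.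
have -> : W + 2 * a * g * (2^-1 * (Qr - 2 * Qdr + Qd)) - (4 * a - 2 * a ^+ 2) * (2^-1 * Qr)
  - (W - 2 * a * (Qr + g * Qdr) + a ^+ 2 * Qr + 2 * a * g * (2^-1 * Qr)) = a * g * Qd.
  by field.
by apply: mulr_ge0 => //; apply: mulr_ge0.
Qed.

Lemma Eiid_hb_avg_le x0 k : (0 < k)%N -> 0 < hb_gain ->
  (Eiid P k.-1 (fun s => (F (hb_avg A b B S omega beta x0 k s))%:E)
   <= ((k%:R * hb_gain)^-1 * hb_lyap (x0, x0))%:E)%E.
Proof.
move=> k_gt0 gain_gt0; have k_neq0 : k%:R != 0 :> R by rewrite pnatr_eq0 -lt0n.
have c_ge0 : 0 <= (k%:R * hb_gain)^-1 by rewrite invr_ge0 mulr_ge0 // ltW.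
have h_ge0 (xx : 'cV[R]_n * 'cV[R]_n) : 0 <= hb_gain * F xx.2.
  by rewrite mulr_ge0 ?mxloss_ge0 // ltW.
have tel := Eiid_path_sum_le h_ge0 hb_lyap_ge0 integrable_hb_lyap_step hb_lyap_decrease
  k.-1 (x0, x0) c_ge0 (lexx 0).
apply: (le_trans _ (le_trans tel _)); last by rewrite add0r.
apply: le_Eiid => [s _|s sk]; first by rewrite lee_fin mxloss_ge0.
rewrite lee_fin add0r /path_sum sk prednK //.
apply: le_trans (mxloss_mean_le _ _ EZ_sym EZ_psd k_gt0) _.
have cD : (k%:R * hb_gain)^-1 * hb_gain = k%:R^-1 by field; rewrite k_neq0 gt_eqF.
by rewrite !mulr_sumr; apply: ler_sum => j _; rewrite [X in _ <= X]mulrA cD.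
Qed.

End HeavyBallLyapunov.

Theorem mainTheorem3 (R : realType) (m n : nat)
  (A : 'M[R]_(m, n)) (b : 'cV[R]_m) (B : 'M[R]_n)
  (d : measure_display) (T : measurableType d) (P : probability T R)
  (q : T -> nat) (S : forall t : T, 'M[R]_(m, q t))
  (omega beta : R) (x0 xstar : 'cV[R]_n) :
  (exists x : 'cV[R]_n, A *m x = b) ->
  spd B ->
  (forall i j, P.-integrable setT (fun t => (Zmat A B S t i j)%:E)) ->
  0 <= beta -> beta < 1 -> 0 < omega -> omega + 2 * beta < 2 ->
  fexp A b B S P xstar = 0%E ->
  forall k : nat, (1 <= k)%N ->
    (Eiid P k.-1 (fun s => fexp A b B S P (hb_avg A b B S omega beta x0 k s))
     <= (((2 * omega * (2 - 2 * beta - omega) * k%:R)^-1)%:E *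
         (((1 - beta) ^+ 2 * normB2 B (x0 - xstar))%:E
          + (2 * omega * beta)%:E * fexp A b B S P x0)))%E.
Proof.
move=> [xs solxs] spdB intZ beta_ge0 beta_lt1 omega_gt0 omega_beta fstar0 k k_gt0.
have fE := fexp_mxloss solxs intZ.
have Fstar0 : mxloss (mx_mean P (Zmat A B S)) xs xstar = 0.
  by apply/eqP; rewrite -(@eqe R) -fE fstar0.
under eq_fun do rewrite fE.
apply: le_trans (Eiid_hb_avg_le spdB solxs intZ (ltW omega_gt0) beta_ge0 beta_lt1 Fstar0
  x0 k_gt0 (hb_gain_gt0 beta_lt1 omega_gt0 omega_beta)) _.
rewrite hb_lyap_start fE -EFinM lee_fin le_eqVlt; apply/orP; left; apply/eqP.
rewrite hb_gainE // /hb_rate /hb_mom /normB2 -/(mxform B _ _).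
set N := mxform B _ _; set F0 := mxloss _ _ _.
have k_neq0 : k%:R != 0 :> R by rewrite pnatr_eq0 -lt0n.
by field; rewrite k_neq0 !gt_eqF ?subr_gt0 //; lra.
Qed.
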